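(* Let $S,T$ be semigroups and $f:S\to T$ a surjective semigroup homomorphism. If $S$ is an inverse semigroup whose semilattice of idempotents $E(S)$ is well-founded, then $T$ is an inverse semigroup whose semilattice of idempotents $E(T)$ is well-founded.
   Context: An inverse semigroup is a semigroup in which every element $a$ has a unique $b$ with $aba=a$ and $bab=b$. Its idempotents $E(S)$ form a commutative subsemigroup (semilattice) ordered by $e\le f$ iff $ef=e$; it is well-founded if every nonempty subset has a minimal element. *)

Definition sg_assoc {S : Type} (m : S -> S -> S) : Prop :=
  forall x y z, m x (m y z) = m (m x y) z.

Definition sg_hom {S T : Type} (mS : S -> S -> S) (mT : T -> T -> T) (f : S -> T) : Prop :=
  forall x y, f (mS x y) = mT (f x) (f y).

Definition is_inverse_semigroup {S : Type} (m : S -> S -> S) : Prop :=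
  forall a : S, exists! b : S, m (m a b) a = a /\ m (m b a) b = b.

Definition idempotent {S : Type} (m : S -> S -> S) (e : S) : Prop := m e e = e.

Definition E_le {S : Type} (m : S -> S -> S) (e f : S) : Prop := m e f = e.

Definition E_well_founded {S : Type} (m : S -> S -> S) : Prop :=
  forall A : S -> Prop,
    (exists e, idempotent m e /\ A e) ->
    exists e, idempotent m e /\ A e /\
      forall g, idempotent m g -> A g -> E_le m g e -> g = e.

From Stdlib Require Import Setoid.

(* A semigroup is *regular* if every element has an inverse
   b (aba = a, bab = b); it is inverse iff in addition the inverse is
   unique, and the classical characterisation says: a regular semigroup is
   inverse exactly when its idempotents commute.  We use both directions:
   - in an inverse semigroup, products of idempotents are idempotent and
     idempotents commute;
   - a regular semigroup whose idempotents commute has unique inverses.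
   Regularity passes to surjective homomorphic images trivially, and by
   Lallement's lemma every idempotent of the image of a regular semigroup
   is the image of an idempotent; hence idempotents of T commute and T is
   inverse.  Finally a descending chain argument transfers well-foundedness:
   if f g1 <= f g with g minimal, then g1 g <= g is idempotent with the
   same image as g1, so g1 g = g and f g1 = f g. *)

Definition regular {S : Type} (m : S -> S -> S) : Prop :=
  forall a : S, exists b : S, m (m a b) a = a /\ m (m b a) b = b.

Ltac reassoc assoc := repeat rewrite <- assoc.

Lemma inverse_semigroup_regular {S : Type} (m : S -> S -> S) :
  is_inverse_semigroup m -> regular m.
Proof. intros Hinv a. destruct (Hinv a) as [b [Hb _]]. now exists b. Qed.

Section InverseSemigroup.

Variables (S : Type) (m : S -> S -> S).
Hypothesis assoc : sg_assoc m.
Hypothesis inverse : is_inverse_semigroup m.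

Lemma inverse_unique a c d :
  m (m a c) a = a /\ m (m c a) c = c ->
  m (m a d) a = a /\ m (m d a) d = d -> c = d.
Proof.
  intros Hc Hd. destruct (inverse a) as [b [_ Hu]].
  now rewrite <- (Hu c Hc), (Hu d Hd).
Qed.

Lemma idempotent_absorb e z : idempotent m e -> m e (m e z) = m e z.
Proof. intro He. now rewrite assoc, He. Qed.

(* E(S) is closed under products: if x is the inverse of ef, then so is
   f x e, which forces x to be idempotent and hence equal to ef *)
Lemma idempotent_mul e f :
  idempotent m e -> idempotent m f -> idempotent m (m e f).
Proof.
  intros He Hf. destruct (inverse (m e f)) as [x [[Hx1 Hx2] _]].
  assert (Hx1' : m e (m f (m x (m e f))) = m e f)
    by (rewrite <- Hx1 at 2; now reassoc assoc).
  assert (Hx2' : m x (m e (m f (m x e))) = m x e).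
  { rewrite <- Hx2 at 3. now reassoc assoc. }
  assert (Hx_fxe : x = m f (m x e)).
  { apply (inverse_unique (m e f)); split; auto; reassoc assoc;
      rewrite ?(idempotent_absorb f _ Hf), ?(idempotent_absorb e _ He).
    - exact Hx1'.
    - now rewrite Hx2'. }
  assert (Hxx : idempotent m x).
  { unfold idempotent. rewrite Hx_fxe at 1 2. reassoc assoc.
    now rewrite Hx2', <- Hx_fxe. }
  assert (Hef : m e f = x).
  { apply (inverse_unique x); split; trivial; unfold idempotent in Hxx;
      now rewrite !Hxx. }
  now rewrite Hef.
Qed.

(* idempotents commute: ef and fe are both inverses of the idempotent ef *)
Lemma idempotent_comm e f :
  idempotent m e -> idempotent m f -> m e f = m f e.
Proof.
  intros He Hf.
  pose proof (idempotent_mul e f He Hf) as Hef.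
  pose proof (idempotent_mul f e Hf He) as Hfe.
  unfold idempotent in Hef, Hfe.
  assert (Hef' : m e (m f (m e f)) = m e f)
    by (rewrite <- Hef at 2; now reassoc assoc).
  assert (Hfe' : m f (m e (m f e)) = m f e)
    by (rewrite <- Hfe at 2; now reassoc assoc).
  apply (inverse_unique (m e f)); split; try now rewrite !Hef.
  - reassoc assoc.
    now rewrite (idempotent_absorb f _ Hf), (idempotent_absorb e _ He).
  - reassoc assoc.
    now rewrite (idempotent_absorb e _ He), (idempotent_absorb f _ Hf).
Qed.

End InverseSemigroup.

Section CommutingIdempotents.

Variables (T : Type) (m : T -> T -> T).
Hypothesis assoc : sg_assoc m.
Hypothesis idempotent_comm :
  forall u v, idempotent m u -> idempotent m v -> m u v = m v u.

Lemma inverse_product_idempotent a b :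
  m (m b a) b = b -> idempotent m (m b a).
Proof. intro Hb. unfold idempotent. now rewrite assoc, Hb. Qed.

(* with commuting idempotents, b = (ba)(ca)b = (ca)(ba)b = cab, and
   symmetrically c = c(ac)(ab) = c(ab)(ac) = cab *)
Lemma inverse_unique_of_comm a b c :
  m (m a b) a = a /\ m (m b a) b = b ->
  m (m a c) a = a /\ m (m c a) c = c -> b = c.
Proof.
  intros [Hb1 Hb2] [Hc1 Hc2].
  pose proof (inverse_product_idempotent a b Hb2) as Eba.
  pose proof (inverse_product_idempotent a c Hc2) as Eca.
  pose proof (inverse_product_idempotent b a Hb1) as Eab.
  pose proof (inverse_product_idempotent c a Hc1) as Eac.
  transitivity (m (m c a) b).
  - transitivity (m (m (m b a) (m c a)) b).
    + rewrite <- Hb2 at 1. rewrite <- Hc1 at 1. now reassoc assoc.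
    + rewrite (idempotent_comm _ _ Eba Eca).
      transitivity (m (m c a) (m (m b a) b)); [now reassoc assoc | now rewrite Hb2].
  - symmetry. transitivity (m c (m (m a b) (m a c))).
    + rewrite <- Hc2 at 1. rewrite <- Hb1 at 1. now reassoc assoc.
    + rewrite (idempotent_comm _ _ Eab Eac).
      transitivity (m (m (m c a) c) (m a b)); [now reassoc assoc|].
      rewrite Hc2. now reassoc assoc.
Qed.

Lemma regular_comm_inverse : regular m -> is_inverse_semigroup m.
Proof.
  intros Hreg a. destruct (Hreg a) as [b Hb].
  exists b. split; [exact Hb|].
  intros c Hc. exact (inverse_unique_of_comm a b c Hb Hc).
Qed.

End CommutingIdempotents.

Section SurjectiveImage.

Variables (S T : Type) (mS : S -> S -> S) (mT : T -> T -> T).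
Hypothesis assocS : sg_assoc mS.
Variable f : S -> T.
Hypothesis hom : sg_hom mS mT f.
Hypothesis surj : forall t : T, exists s : S, f s = t.

Lemma regular_image : regular mS -> regular mT.
Proof.
  intros Hreg t. destruct (surj t) as [s <-].
  destruct (Hreg s) as [s' [H1 H2]].
  exists (f s'). split; rewrite <- !hom; congruence.
Qed.

(* Lallement's lemma: if f a is idempotent and b is an inverse of a^2,
   then a b a is an idempotent of S mapped to f a *)
Lemma lallement : regular mS ->
  forall a, idempotent mT (f a) -> exists g, idempotent mS g /\ f g = f a.
Proof.
  intros Hreg a Ha. destruct (Hreg (mS a a)) as [b [Hb1 Hb2]].
  exists (mS (mS a b) a). split.
  - unfold idempotent.
    transitivity (mS (mS a (mS (mS b (mS a a)) b)) a); [now reassoc assocS|].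
    now rewrite Hb2.
  - transitivity (f (mS (mS (mS a a) b) (mS a a))).
    + rewrite !hom. unfold idempotent in Ha. now rewrite !Ha.
    + now rewrite Hb1, hom.
Qed.

Lemma idempotent_lift : regular mS ->
  forall u, idempotent mT u -> exists g, idempotent mS g /\ f g = u.
Proof.
  intros Hreg u Hu. destruct (surj u) as [a <-]. exact (lallement Hreg a Hu).
Qed.

Lemma idempotent_image g : idempotent mS g -> idempotent mT (f g).
Proof. intro Hg. unfold idempotent. now rewrite <- hom, Hg. Qed.

Hypothesis inverseS : is_inverse_semigroup mS.

(* idempotents of T commute, since they lift to commuting ones of S *)
Lemma image_idempotent_comm :
  forall u v, idempotent mT u -> idempotent mT v -> mT u v = mT v u.
Proof.
  pose proof (inverse_semigroup_regular mS inverseS) as Hreg.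
  intros u v Hu Hv.
  destruct (idempotent_lift Hreg u Hu) as [g [Hg <-]].
  destruct (idempotent_lift Hreg v Hv) as [h [Hh <-]].
  now rewrite <- !hom, (idempotent_comm S mS assocS inverseS g h Hg Hh).
Qed.

(* a minimal idempotent g of the preimage of A maps to a minimal element
   of A: if f g1 <= f g then g1 g <= g lies in the preimage, so g1 g = g *)
Lemma E_well_founded_image : E_well_founded mS -> E_well_founded mT.
Proof.
  pose proof (inverse_semigroup_regular mS inverseS) as Hreg.
  intros Hwf A [e0 [He0 HA0]].
  destruct (idempotent_lift Hreg e0 He0) as [g0 [Hg0 Hfg0]].
  destruct (Hwf (fun g => A (f g))) as [g [Hg [HAg Hmin]]].
  { exists g0. split; [exact Hg0 | now rewrite Hfg0]. }
  exists (f g). split; [exact (idempotent_image g Hg)|]. split; [exact HAg|].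
  intros u Hu HAu Hle. destruct (idempotent_lift Hreg u Hu) as [g1 [Hg1 <-]].
  unfold E_le in Hle. rewrite <- hom in Hle.
  assert (Hg1g : mS g1 g = g).
  { apply Hmin.
    - exact (idempotent_mul S mS assocS inverseS g1 g Hg1 Hg).
    - now rewrite Hle.
    - unfold E_le. now rewrite <- assocS, Hg. }
  now rewrite <- Hle, Hg1g.
Qed.

End SurjectiveImage.

Theorem mainTheorem14 (S T : Type) (mS : S -> S -> S) (mT : T -> T -> T)
  (HS : sg_assoc mS) (HT : sg_assoc mT)
  (f : S -> T) (Hf : sg_hom mS mT f) (Hsurj : forall t : T, exists s : S, f s = t)
  (Hinv : is_inverse_semigroup mS) (Hwf : E_well_founded mS) :
  is_inverse_semigroup mT /\ E_well_founded mT.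
Proof.
  split.
  - apply (regular_comm_inverse T mT HT).
    + exact (image_idempotent_comm S T mS mT HS f Hf Hsurj Hinv).
    + exact (regular_image S T mS mT f Hf Hsurj (inverse_semigroup_regular mS Hinv)).
  - exact (E_well_founded_image S T mS mT HS f Hf Hsurj Hinv Hwf).
Qed.
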